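(* For any positive integers $m$ and $n$ the following three identities hold: \begin{align*} &\zeta^\star(\{2\}^m,1)\cdot\zeta^\star(\{ 2 \}^n,1) =\zeta^\star(\{2\}^m,1,\{2\}^n,1)+\zeta^\star(\{2\}^n,1,\{2\}^m,1), \\ &\zeta^\star(\{2\}^m,1)\cdot\zeta^\star(\{2\}^n) =\zeta^\star(\{2\}^m,1,\{2\}^n)+\zeta^\star(\{2\}^{n-1},3,\{2\}^m), \\ &\zeta^\star(\{2\}^m)\cdot\zeta^\star(\{2\}^n) =\zeta^\star(\{2\}^{m-1},3,\{2\}^{n-1},1) +\zeta^\star(\{2\}^{n-1},3,\{2\}^{m-1},1). \end{align*}
   Context: For positive integers $k_1,\ldots,k_r$ with $k_1\geq 2$, the multiple zeta-star value is $\zeta^\star(k_1,\ldots,k_r)=\sum_{m_1\geq m_2\geq\cdots\geq m_r\geq 1} m_1^{-k_1}\cdots m_r^{-k_r}$. The notation $\{2\}^n$ stands for the string $2,\ldots,2$ of $n$ copies of $2$ (empty if $n=0$). *)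

From Stdlib Require Import Reals List.
From Coquelicot Require Import Coquelicot.
Import ListNotations.
Open Scope R_scope.

(* Truncated multiple zeta-star sum:
   zs_trunc [k1;...;kr] N = sum_{N >= m1 >= m2 >= ... >= mr >= 1} m1^-k1 ... mr^-kr,
   with zs_trunc [] N = 1. *)
Fixpoint zs_trunc (ks : list nat) (N : nat) : R :=
  match ks with
  | nil => 1
  | k :: ks' =>
      (fix go (n : nat) : R :=
         match n with
         | O => 0
         | S n' => go n' + / (INR n ^ k) * zs_trunc ks' n
         end) N
  end.

Definition zeta_star (ks : list nat) : R := real (Lim_seq (zs_trunc ks)).

Definition twos (n : nat) : list nat := repeat 2%nat n.

From Stdlib Require Import Reals List Lra Lia.
From Coquelicot Require Import Coquelicot.
Import ListNotations.
Open Scope R_scope.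

(* Connector method.  Every truncated sum [zs_trunc ks N] equals
   [sum_{k <= N} conn N k * psi k] for a single-index weight [psi] depending
   only on [ks].  Prepending an index 1, 2 or 3 transforms the weight
   explicitly; the proof is a summation by parts which telescopes because
   [2 k conn N k] and [2 N conn N k] are the difference and the sum of two
   consecutive values of [hconn N].  Since [0 <= 1 - conn N k <= k^2 / N] and the
   weights are O(1/k^2), letting N -> oo gives [zeta_star ks = sum_k psi k].
   For the words of the theorem the weights of the two right-hand sides are
   the two halves of the product of the series,
   [sum f * sum g = sum_k (f_k g_k / 2 + f_k sum_{l<k} g_l) + (f <-> g)]. *)

Fixpoint sum_to (N : nat) (f : nat -> R) : R :=
  match N with O => 0 | S N' => sum_to N' f + f N end.

Lemma sum_to_ext N f g :
  (forall k, (1 <= k <= N)%nat -> f k = g k) -> sum_to N f = sum_to N g.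
Proof.
  induction N as [|N IH]; intros Hfg; simpl; [reflexivity|].
  rewrite (Hfg (S N)) by lia; f_equal; apply IH; intros; apply Hfg; lia.
Qed.

Lemma sum_to_plus N f g : sum_to N (fun k => f k + g k) = sum_to N f + sum_to N g.
Proof. induction N as [|N IH]; simpl; [lra | rewrite IH; lra]. Qed.

Lemma sum_to_scal_l N c f : sum_to N (fun k => c * f k) = c * sum_to N f.
Proof. induction N as [|N IH]; simpl; [lra | rewrite IH; lra]. Qed.

Lemma sum_to_minus N f g : sum_to N (fun k => f k - g k) = sum_to N f - sum_to N g.
Proof. induction N as [|N IH]; simpl; [lra | rewrite IH; lra]. Qed.

Lemma sum_to_opp N f : sum_to N (fun k => - f k) = - sum_to N f.
Proof. induction N as [|N IH]; simpl; [lra | rewrite IH; lra]. Qed.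

Lemma sum_to_le N f g :
  (forall k, (1 <= k <= N)%nat -> f k <= g k) -> sum_to N f <= sum_to N g.
Proof.
  induction N as [|N IH]; intros Hfg; simpl; [lra|].
  assert (sum_to N f <= sum_to N g) by (apply IH; intros; apply Hfg; lia).
  specialize (Hfg (S N) ltac:(lia)); lra.
Qed.

Lemma sum_to_nonneg N f : (forall k, (1 <= k <= N)%nat -> 0 <= f k) -> 0 <= sum_to N f.
Proof.
  induction N as [|N IH]; intros Hf; simpl; [lra|].
  assert (0 <= sum_to N f) by (apply IH; intros; apply Hf; lia).
  specialize (Hf (S N) ltac:(lia)); lra.
Qed.

Lemma sum_to_abs N f : Rabs (sum_to N f) <= sum_to N (fun k => Rabs (f k)).
Proof.
  induction N as [|N IH]; simpl; [rewrite Rabs_R0; lra|].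
  eapply Rle_trans; [apply Rabs_triang | lra].
Qed.

Lemma sum_to_telescope N u : sum_to N (fun k => u k - u (S k)) = u 1%nat - u (S N).
Proof. induction N as [|N IH]; simpl; [ring | rewrite IH; ring]. Qed.

Lemma sum_to_exchange N a b :
  sum_to N (fun k => a k * sum_to (pred k) b)
  = sum_to N (fun l => b l * (sum_to N a - sum_to l a)).
Proof.
  induction N as [|N IH]; [reflexivity|].
  cbn [sum_to pred]; rewrite IH.
  replace (sum_to N (fun l => b l * (sum_to N a + a (S N) - sum_to l a)))
    with (sum_to N (fun l => b l * (sum_to N a - sum_to l a) + a (S N) * b l))
    by (apply sum_to_ext; intros; ring).
  rewrite sum_to_plus, sum_to_scal_l; ring.
Qed.

Lemma sum_inv_sq_step K :
  (1 <= K)%nat -> / INR (S K) ^ 2 <= / INR K - / INR (S K).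
Proof.
  intros HK; rewrite S_INR.
  assert (0 < INR K) by (apply lt_0_INR; lia).
  replace (/ INR K - / (INR K + 1)) with (/ (INR K * (INR K + 1))) by (field; lra).
  apply Rinv_le_contravar; [apply Rmult_lt_0_compat|]; nra.
Qed.

Lemma sum_inv_sq_le_sub K :
  (1 <= K)%nat -> sum_to K (fun k => / INR k ^ 2) <= 2 - / INR K.
Proof.
  induction K as [|K IH]; intros HK; [lia|].
  destruct K as [|K]; [simpl; lra|].
  pose proof (IH ltac:(lia)); pose proof (sum_inv_sq_step (S K) ltac:(lia)).
  cbn [sum_to] in *; lra.
Qed.

Lemma sum_inv_sq_le K : sum_to K (fun k => / INR k ^ 2) <= 2.
Proof.
  destruct K as [|K]; [simpl; lra|].
  pose proof (sum_inv_sq_le_sub (S K) ltac:(lia)).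
  assert (0 < / INR (S K)) by (apply Rinv_0_lt_compat, lt_0_INR; lia); lra.
Qed.

(* [conn N k = N!^2 / ((N-k)! (N+k)!)] for [k <= N], and [0] for [k > N]: the
   connector of Seki and Yamamoto. *)
Fixpoint conn (N k : nat) : R :=
  match k with
  | O => 1
  | S k' => conn N k' * (INR N - INR k') / (INR N + INR k' + 1)
  end.

Definition hconn (N k : nat) : R := conn N k * (INR N + INR k).

Lemma conn_S N k : conn N (S k) = conn N k * (INR N - INR k) / (INR N + INR k + 1).
Proof. reflexivity. Qed.

Lemma hconn_S N k : hconn N (S k) = conn N k * (INR N - INR k).
Proof.
  unfold hconn; rewrite conn_S, S_INR.
  assert (0 <= INR N) by apply pos_INR; assert (0 <= INR k) by apply pos_INR.
  field; lra.
Qed.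

Lemma hconn_sub N k : hconn N k - hconn N (S k) = 2 * INR k * conn N k.
Proof. rewrite hconn_S; unfold hconn; ring. Qed.

Lemma hconn_add N k : hconn N k + hconn N (S k) = 2 * INR N * conn N k.
Proof. rewrite hconn_S; unfold hconn; ring. Qed.

Lemma conn_vanish N : conn N (S N) = 0.
Proof. rewrite conn_S, Rminus_diag; unfold Rdiv; ring. Qed.

Lemma hconn_vanish N : hconn N (S N) = 0.
Proof. unfold hconn; rewrite conn_vanish; ring. Qed.

Lemma hconn_1 N : hconn N 1 = INR N.
Proof.
  unfold hconn; rewrite conn_S; simpl conn; simpl INR.
  assert (0 <= INR N) by apply pos_INR; field; lra.
Qed.

Lemma conn_succ_sub N k :
  conn (S N) k - conn N k = conn (S N) k * INR k ^ 2 / INR (S N) ^ 2.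
Proof.
  assert (Hrel : conn N k * INR (S N) ^ 2 = conn (S N) k * (INR (S N) ^ 2 - INR k ^ 2)).
  { induction k as [|k IH]; [simpl; ring|].
    rewrite !conn_S.
    assert (0 <= INR N) by apply pos_INR; assert (0 <= INR k) by apply pos_INR.
    replace (conn N k * (INR N - INR k) / (INR N + INR k + 1) * INR (S N) ^ 2)
      with (conn N k * INR (S N) ^ 2 * (INR N - INR k) / (INR N + INR k + 1))
      by (field; lra).
    rewrite IH, !S_INR; field; lra. }
  assert (0 < INR (S N)) by (apply lt_0_INR; lia).
  apply (Rmult_eq_reg_r (INR (S N) ^ 2)); [|apply pow_nonzero; lra].
  rewrite Rmult_minus_distr_r, Hrel; field; lra.
Qed.

Lemma sum_to_conn_succ N f :
  sum_to (S N) (fun k => conn N k * f k) = sum_to N (fun k => conn N k * f k).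
Proof. cbn [sum_to]; rewrite conn_vanish; ring. Qed.

Lemma conn_bounds N k : (k <= N)%nat ->
  0 <= conn N k <= 1 /\ INR N * (1 - conn N k) <= INR k ^ 2.
Proof.
  induction k as [|k IH]; intros Hk; [simpl; lra|].
  destruct (IH ltac:(lia)) as [[Hc0 Hc1] Hdef].
  assert (INR k < INR N) by (apply lt_INR; lia).
  assert (0 <= INR k) by apply pos_INR.
  set (q := (INR N - INR k) / (INR N + INR k + 1)).
  assert (Hq1 : (INR N + INR k + 1) * (1 - q) = 2 * INR k + 1) by (unfold q; field; lra).
  assert (Hq0 : 0 <= q) by (apply Rdiv_le_0_compat; lra).
  assert (Hq2 : 0 <= 1 - q) by nra.
  replace (conn N (S k)) with (conn N k * q) by (unfold q; rewrite conn_S; field; lra).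
  assert (INR N * (conn N k * (1 - q)) <= 2 * INR k + 1).
  { apply Rle_trans with ((INR N + INR k + 1) * (1 - q) * conn N k).
    { assert (0 <= (1 - q) * conn N k) by (apply Rmult_le_pos; lra); nra. }
    rewrite Hq1; nra. }
  rewrite S_INR; split; [split; nra|nra].
Qed.

Lemma sum_id_conn N M :
  2 * sum_to M (fun k => INR k * conn N k) = hconn N 1 - hconn N (S M).
Proof.
  rewrite <- sum_to_scal_l, <- sum_to_telescope.
  apply sum_to_ext; intros k _; rewrite hconn_sub; ring.
Qed.

Lemma sum_alt_conn N M :
  2 * INR N * sum_to M (fun k => (-1) ^ k * conn N k)
  = (-1) ^ M * hconn N (S M) - hconn N 1.
Proof.
  rewrite <- sum_to_scal_l.
  transitivity (sum_to M (fun k => (-1) ^ k * hconn N k - (-1) ^ S k * hconn N (S k))).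
  - apply sum_to_ext; intros k _.
    replace (2 * INR N * ((-1) ^ k * conn N k)) with ((-1) ^ k * (2 * INR N * conn N k))
      by ring.
    rewrite <- hconn_add; simpl pow; ring.
  - rewrite sum_to_telescope; simpl pow; ring.
Qed.

Lemma sum_to_prefix N c chi :
  sum_to N (fun k => c k * (chi k + 2 * sum_to (pred k) chi))
  = sum_to N (fun l => chi l * (c l + 2 * (sum_to N c - sum_to l c))).
Proof.
  transitivity (sum_to N (fun k => c k * chi k + 2 * (c k * sum_to (pred k) chi))).
  { apply sum_to_ext; intros; ring. }
  rewrite sum_to_plus, sum_to_scal_l, sum_to_exchange, <- sum_to_scal_l, <- sum_to_plus.
  apply sum_to_ext; intros; ring.
Qed.

Lemma sum_conn_id_prefix N psi :
  sum_to N (fun k => INR k * conn N k * (psi k + 2 * sum_to (pred k) psi))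
  = INR N * sum_to N (fun k => conn N k * psi k).
Proof.
  rewrite (sum_to_prefix N (fun k => INR k * conn N k)), <- sum_to_scal_l.
  apply sum_to_ext; intros l _.
  replace (2 * (sum_to N (fun k => INR k * conn N k) - sum_to l (fun k => INR k * conn N k)))
    with (hconn N (S l))
    by (rewrite Rmult_minus_distr_l, !sum_id_conn, hconn_vanish; ring).
  rewrite hconn_S; ring.
Qed.

Lemma sum_conn_alt_prefix N chi :
  INR N * sum_to N (fun k => (-1) ^ k * conn N k * (chi k + 2 * sum_to (pred k) chi))
  = sum_to N (fun k => INR k * (-1) ^ k * conn N k * chi k).
Proof.
  rewrite (sum_to_prefix N (fun k => (-1) ^ k * conn N k)), <- sum_to_scal_l.
  apply sum_to_ext; intros l _.
  set (A := fun M => sum_to M (fun k => (-1) ^ k * conn N k)).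
  assert (E : 2 * INR N * (A N - A l) = - (-1) ^ l * hconn N (S l))
    by (unfold A; rewrite Rmult_minus_distr_l, !sum_alt_conn, hconn_vanish; ring).
  transitivity (chi l * ((-1) ^ l * INR N * conn N l + 2 * INR N * (A N - A l))).
  { unfold A; ring. }
  rewrite E, hconn_S; ring.
Qed.

(* [N = 0] is excluded because [zs_trunc [] 0 = 1]. *)
Definition represents (ks : list nat) (psi : nat -> R) : Prop :=
  forall N, (1 <= N)%nat -> zs_trunc ks N = sum_to N (fun k => conn N k * psi k).

Lemma zs_trunc_cons_S a ks n :
  zs_trunc (a :: ks) (S n) = zs_trunc (a :: ks) n + / INR (S n) ^ a * zs_trunc ks (S n).
Proof. reflexivity. Qed.

Lemma represents_ext ks psi phi :
  represents ks psi -> (forall k, (1 <= k)%nat -> psi k = phi k) -> represents ks phi.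
Proof.
  intros Hpsi E N HN; rewrite Hpsi by exact HN.
  apply sum_to_ext; intros k Hk; rewrite E by lia; reflexivity.
Qed.

(* The increment in [N] of [sum_to N (fun k => conn N k * phi k)] is
   [/ N^2 * sum_to N (fun k => conn N k * k^2 * phi k)] (conn_succ_sub), and it has
   to match the increment [/ N^a * zs_trunc ks N] of [zs_trunc (a :: ks) N]. *)
Lemma represents_cons a ks psi phi :
  represents ks psi ->
  (forall N, (1 <= N)%nat ->
     INR N ^ a * sum_to N (fun k => conn N k * INR k ^ 2 * phi k)
     = INR N ^ 2 * sum_to N (fun k => conn N k * psi k)) ->
  represents (a :: ks) phi.
Proof.
  intros Hpsi Hkey N _; induction N as [|n IH]; [reflexivity|].
  rewrite zs_trunc_cons_S, IH, Hpsi, <- (sum_to_conn_succ n phi) by lia.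
  assert (0 < INR (S n)) by (apply lt_0_INR; lia).
  assert (INR (S n) ^ a <> 0) by (apply pow_nonzero; lra).
  pose proof (Hkey (S n) ltac:(lia)) as Hk.
  set (B := sum_to (S n) (fun k => conn (S n) k * psi k)) in *.
  set (K := sum_to (S n) (fun k => conn (S n) k * INR k ^ 2 * phi k)) in *.
  assert (Hgap : sum_to (S n) (fun k => conn (S n) k * phi k)
                 - sum_to (S n) (fun k => conn n k * phi k) = / INR (S n) ^ 2 * K).
  { unfold K; rewrite <- sum_to_minus, <- sum_to_scal_l.
    apply sum_to_ext; intros k _.
    rewrite <- Rmult_minus_distr_r, conn_succ_sub; field; lra. }
  assert (HB : B = INR (S n) ^ a * K / INR (S n) ^ 2) by (rewrite Hk; field; lra).
  rewrite HB.
  replace (/ INR (S n) ^ a * (INR (S n) ^ a * K / INR (S n) ^ 2)) with (/ INR (S n) ^ 2 * K)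
    by (field; lra).
  lra.
Qed.

Lemma represents_cons2 ks psi :
  represents ks psi -> represents (2%nat :: ks) (fun k => psi k / INR k ^ 2).
Proof.
  intros Hpsi; apply represents_cons with psi; [exact Hpsi|].
  intros N _; f_equal; apply sum_to_ext; intros k Hk.
  assert (0 < INR k) by (apply lt_0_INR; lia); field; lra.
Qed.

Definition weight1 (psi : nat -> R) (k : nat) : R :=
  (psi k + 2 * sum_to (pred k) psi) / INR k.

Lemma represents_cons1 ks psi :
  represents ks psi -> represents (1%nat :: ks) (weight1 psi).
Proof.
  intros Hpsi; apply represents_cons with psi; [exact Hpsi|].
  intros N _.
  replace (sum_to N (fun k => conn N k * INR k ^ 2 * weight1 psi k))
    with (sum_to N (fun k => INR k * conn N k * (psi k + 2 * sum_to (pred k) psi))).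
  - rewrite sum_conn_id_prefix; ring.
  - apply sum_to_ext; intros k Hk; unfold weight1.
    assert (0 < INR k) by (apply lt_0_INR; lia); field; lra.
Qed.

Lemma pow_m1_sqr k : (-1) ^ k * (-1) ^ k = 1.
Proof. rewrite <- Rpow_mult_distr; replace (-1 * -1) with 1 by ring; apply pow1. Qed.

Definition alt_div (psi : nat -> R) (k : nat) : R := (-1) ^ k * psi k / INR k.

Definition weight3 (psi : nat -> R) (k : nat) : R :=
  (-1) ^ k * (alt_div psi k + 2 * sum_to (pred k) (alt_div psi)) / INR k ^ 2.

Lemma represents_cons3 ks psi :
  represents ks psi -> represents (3%nat :: ks) (weight3 psi).
Proof.
  intros Hpsi; apply represents_cons with psi; [exact Hpsi|].
  intros N _.
  replace (sum_to N (fun k => conn N k * INR k ^ 2 * weight3 psi k))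
    with (sum_to N (fun k => (-1) ^ k * conn N k
                             * (alt_div psi k + 2 * sum_to (pred k) (alt_div psi)))).
  - transitivity (INR N ^ 2 * (INR N * sum_to N (fun k => (-1) ^ k * conn N k
                    * (alt_div psi k + 2 * sum_to (pred k) (alt_div psi))))); [ring|].
    rewrite sum_conn_alt_prefix; f_equal; apply sum_to_ext; intros k Hk; unfold alt_div.
    assert (0 < INR k) by (apply lt_0_INR; lia).
    transitivity ((-1) ^ k * (-1) ^ k * conn N k * psi k); [field; lra|].
    rewrite pow_m1_sqr; ring.
  - apply sum_to_ext; intros k Hk; unfold weight3.
    assert (0 < INR k) by (apply lt_0_INR; lia); field; lra.
Qed.

Definition alt_weight (k : nat) : R := -2 * (-1) ^ k.

Lemma represents_nil : represents [] alt_weight.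
Proof.
  intros N HN; change (zs_trunc [] N) with 1.
  assert (0 < INR N) by (apply lt_0_INR; lia).
  pose proof (sum_alt_conn N N) as E; rewrite hconn_vanish, hconn_1 in E.
  transitivity (-2 * sum_to N (fun k => (-1) ^ k * conn N k)).
  - apply (Rmult_eq_reg_l (INR N)); [|lra].
    transitivity (- (2 * INR N * sum_to N (fun k => (-1) ^ k * conn N k))); [|ring].
    rewrite E; ring.
  - rewrite <- sum_to_scal_l; apply sum_to_ext; intros; unfold alt_weight; ring.
Qed.

Lemma represents_twos m ks psi :
  represents ks psi -> represents (twos m ++ ks) (fun k => psi k / (INR k ^ 2) ^ m).
Proof.
  intros Hpsi; induction m as [|m IH].
  - apply represents_ext with psi; [exact Hpsi|]; intros; simpl; field.
  - apply represents_ext with (fun k => psi k / (INR k ^ 2) ^ m / INR k ^ 2).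
    + exact (represents_cons2 _ _ IH).
    + intros k Hk; assert (0 < INR k) by (apply lt_0_INR; lia).
      rewrite <- (tech_pow_Rmult (INR k ^ 2) m).
      field; split; [apply pow_nonzero, pow_nonzero|]; lra.
Qed.

Definition stuffle_weight (f g : nat -> R) (k : nat) : R :=
  f k * g k / 2 + f k * sum_to (pred k) g.

Lemma sum_to_stuffle N f g :
  sum_to N f * sum_to N g = sum_to N (stuffle_weight f g) + sum_to N (stuffle_weight g f).
Proof.
  induction N as [|N IH]; [simpl; ring|].
  cbn [sum_to].
  replace (stuffle_weight f g (S N)) with (f (S N) * g (S N) / 2 + f (S N) * sum_to N g)
    by reflexivity.
  replace (stuffle_weight g f (S N)) with (g (S N) * f (S N) / 2 + g (S N) * sum_to N f)
    by reflexivity.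
  transitivity (sum_to N f * sum_to N g + f (S N) * g (S N)
                + f (S N) * sum_to N g + g (S N) * sum_to N f); [ring|].
  rewrite IH; field.
Qed.

Definition inv_sq_bounded (psi : nat -> R) : Prop :=
  exists C, 0 <= C /\ forall k, (1 <= k)%nat -> Rabs (psi k) <= C / INR k ^ 2.

Lemma abs_sum_to_weighted_le C c psi K :
  0 <= C -> (forall k, (1 <= k)%nat -> Rabs (psi k) <= C / INR k ^ 2) ->
  (forall k, (1 <= k <= K)%nat -> Rabs (c k) <= 1) ->
  Rabs (sum_to K (fun k => c k * psi k)) <= 2 * C.
Proof.
  intros HC Hpsi Hc.
  eapply Rle_trans; [apply sum_to_abs|].
  apply Rle_trans with (sum_to K (fun k => C * / INR k ^ 2)).
  - apply sum_to_le; intros k Hk; rewrite Rabs_mult.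
    rewrite <- (Rmult_1_l (C * / INR k ^ 2)).
    apply Rmult_le_compat; [apply Rabs_pos | apply Rabs_pos | apply Hc; lia | apply Hpsi; lia].
  - rewrite sum_to_scal_l; pose proof (sum_inv_sq_le K); nra.
Qed.

Lemma inv_sq_bounded_stuffle f g :
  inv_sq_bounded f -> inv_sq_bounded g -> inv_sq_bounded (stuffle_weight f g).
Proof.
  intros [Cf [HCf Hf]] [Cg [HCg Hg]].
  exists (3 * Cf * Cg); split; [nra|]; intros k Hk.
  assert (1 <= INR k) by (apply (le_INR 1); lia).
  set (i := / INR k ^ 2).
  assert (Hi : 0 < i <= 1).
  { unfold i; split; [apply Rinv_0_lt_compat, pow_lt; lra|].
    rewrite <- Rinv_1; apply Rinv_le_contravar; [lra|]; simpl; nra. }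
  assert (HS : Rabs (sum_to (pred k) g) <= 2 * Cg).
  { replace (sum_to (pred k) g) with (sum_to (pred k) (fun l => 1 * g l))
      by (apply sum_to_ext; intros; ring).
    apply abs_sum_to_weighted_le; [exact HCg | exact Hg|].
    intros; rewrite Rabs_R1; lra. }
  specialize (Hf k Hk); specialize (Hg k Hk); unfold Rdiv in *; fold i in Hf, Hg |- *.
  assert (Rabs (f k) * Rabs (g k) <= Cf * i * (Cg * i))
    by (apply Rmult_le_compat; auto using Rabs_pos).
  assert (Rabs (f k) * Rabs (sum_to (pred k) g) <= Cf * i * (2 * Cg))
    by (apply Rmult_le_compat; auto using Rabs_pos).
  assert (0 <= Cf * Cg * i) by (apply Rmult_le_pos; nra).
  unfold stuffle_weight.
  eapply Rle_trans; [apply Rabs_triang|].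
  unfold Rdiv; rewrite !Rabs_mult, Rabs_inv, (Rabs_pos_eq 2) by lra.
  nra.
Qed.

Definition defect (N k : nat) : R := (1 - conn N k) / INR k ^ 2.

Lemma defect_bounds N k : (1 <= k <= N)%nat ->
  0 <= defect N k <= / INR N /\ defect N k <= / INR k ^ 2.
Proof.
  intros Hk; destruct (conn_bounds N k ltac:(lia)) as [[Hc0 Hc1] Hgap].
  assert (0 < INR k) by (apply lt_0_INR; lia).
  assert (0 < INR N) by (apply lt_0_INR; lia).
  assert (0 < INR k ^ 2) by (apply pow_lt; lra).
  unfold defect, Rdiv; split; [split|].
  - apply Rmult_le_pos; [lra | apply Rlt_le, Rinv_0_lt_compat; lra].
  - apply (Rmult_le_reg_l (INR N * INR k ^ 2)); [nra|].
    replace (INR N * INR k ^ 2 * ((1 - conn N k) * / INR k ^ 2)) with (INR N * (1 - conn N k))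
      by (field; lra).
    replace (INR N * INR k ^ 2 * / INR N) with (INR k ^ 2) by (field; lra).
    exact Hgap.
  - rewrite <- (Rmult_1_l (/ INR k ^ 2)) at 2.
    apply Rmult_le_compat_r; [apply Rlt_le, Rinv_0_lt_compat|]; lra.
Qed.

Lemma sum_defect_head N K : (K <= N)%nat -> sum_to K (defect N) <= INR K / INR N.
Proof.
  induction K as [|K IH]; intros HK; [simpl; unfold Rdiv; lra|].
  destruct (defect_bounds N (S K) ltac:(lia)) as [[_ Hd] _].
  cbn [sum_to]; rewrite S_INR; pose proof (IH ltac:(lia)); unfold Rdiv in *; lra.
Qed.

Lemma sum_defect_le N M K : (1 <= M <= K)%nat -> (K <= N)%nat ->
  sum_to K (defect N) <= INR M / INR N + / INR M - / INR K.
Proof.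
  induction K as [|K IH]; intros HM HK; [lia|].
  destruct (Nat.eq_dec M (S K)) as [->|HMK].
  - pose proof (sum_defect_head N (S K) HK); lra.
  - destruct (defect_bounds N (S K) ltac:(lia)) as [_ Hd].
    pose proof (IH ltac:(lia) ltac:(lia)); pose proof (sum_inv_sq_step K ltac:(lia)).
    cbn [sum_to]; lra.
Qed.

Lemma sum_defect_tendsto_0 : is_lim_seq (fun N => sum_to N (defect N)) 0.
Proof.
  apply is_lim_seq_Reals; intros eps Heps.
  destruct (archimed_cor1 (eps / 2)) as [M [HM HM0]]; [lra|].
  assert (0 < INR M) by (apply lt_0_INR; lia).
  destruct (archimed_cor1 (eps / (2 * INR M))) as [N0 [HN0 HN00]];
    [apply Rdiv_lt_0_compat; lra|].
  exists (N0 + M)%nat; intros N HN; unfold R_dist; rewrite Rminus_0_r.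
  assert (0 < INR N0) by (apply lt_0_INR; lia).
  assert (INR N0 <= INR N) by (apply le_INR; lia).
  pose proof (sum_defect_le N M N ltac:(lia) ltac:(lia)).
  assert (0 <= sum_to N (defect N))
    by (apply sum_to_nonneg; intros k Hk; apply (defect_bounds N k Hk)).
  assert (INR M / INR N <= INR M * / INR N0)
    by (unfold Rdiv; apply Rmult_le_compat_l; [lra | apply Rinv_le_contravar; lra]).
  assert (INR M * / INR N0 < eps / 2).
  { replace (eps / 2) with (INR M * (eps / (2 * INR M))) by (field; lra).
    apply Rmult_lt_compat_l; lra. }
  assert (0 < / INR N) by (apply Rinv_0_lt_compat; lra).
  rewrite Rabs_pos_eq by lra; lra.
Qed.

Lemma zs_trunc_nonneg ks N : 0 <= zs_trunc ks N.
Proof.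
  revert N; induction ks as [|a ks IH]; intros N; [simpl; lra|].
  induction N as [|N IHN]; [simpl; lra|].
  rewrite zs_trunc_cons_S.
  assert (0 < / INR (S N) ^ a) by (apply Rinv_0_lt_compat, pow_lt, lt_0_INR; lia).
  pose proof (IH (S N)); nra.
Qed.

Lemma zs_trunc_mono ks N : zs_trunc ks N <= zs_trunc ks (S N).
Proof.
  destruct ks as [|a ks]; [simpl; lra|].
  rewrite zs_trunc_cons_S.
  assert (0 < / INR (S N) ^ a) by (apply Rinv_0_lt_compat, pow_lt, lt_0_INR; lia).
  pose proof (zs_trunc_nonneg ks (S N)); nra.
Qed.

Lemma abs_sum_conn_gap C psi N : (1 <= N)%nat ->
  (forall k, (1 <= k)%nat -> Rabs (psi k) <= C / INR k ^ 2) ->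
  Rabs (sum_to N (fun k => conn N k * psi k) - sum_to N psi) <= C * sum_to N (defect N).
Proof.
  intros HN Hpsi.
  rewrite <- sum_to_minus, <- sum_to_scal_l.
  eapply Rle_trans; [apply sum_to_abs|]; apply sum_to_le; intros k Hk.
  destruct (conn_bounds N k ltac:(lia)) as [[Hc0 Hc1] _].
  replace (conn N k * psi k - psi k) with (- ((1 - conn N k) * psi k)) by ring.
  rewrite Rabs_Ropp, Rabs_mult, (Rabs_pos_eq (1 - conn N k)) by lra.
  apply Rle_trans with ((1 - conn N k) * (C / INR k ^ 2)).
  - apply Rmult_le_compat_l; [lra | apply Hpsi; lia].
  - unfold defect, Rdiv; right; ring.
Qed.

Lemma is_lim_seq_zeta_star ks psi :
  represents ks psi -> inv_sq_bounded psi ->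
  is_lim_seq (fun N => sum_to N psi) (zeta_star ks).
Proof.
  intros Hrep [C [HC Hpsi]].
  assert (Hbound : forall N, zs_trunc ks N <= 2 * C).
  { intros N; eapply Rle_trans; [apply zs_trunc_mono|].
    rewrite Hrep by lia; eapply Rle_trans; [apply Rle_abs|].
    apply abs_sum_to_weighted_le; [exact HC | exact Hpsi|].
    intros k Hk; destruct (conn_bounds (S N) k ltac:(lia)) as [Hc _].
    rewrite Rabs_pos_eq; lra. }
  destruct (ex_finite_lim_seq_incr _ _ (zs_trunc_mono ks) Hbound) as [L HL].
  assert (Hz : zeta_star ks = L)
    by (unfold zeta_star; rewrite (is_lim_seq_unique _ _ HL); reflexivity).
  assert (Hgap : is_lim_seq (fun N => zs_trunc ks N - sum_to N psi) 0).
  { apply is_lim_seq_abs_0.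
    apply is_lim_seq_le_le_loc with (fun _ => 0) (fun N => C * sum_to N (defect N)).
    - exists 1%nat; intros N HN; split; [apply Rabs_pos|].
      rewrite Hrep by exact HN; apply abs_sum_conn_gap; assumption.
    - apply is_lim_seq_const.
    - replace (Finite 0) with (Rbar_mult C 0) by (simpl; f_equal; ring).
      apply is_lim_seq_scal_l, sum_defect_tendsto_0. }
  rewrite Hz; replace L with (L - 0) by ring.
  apply is_lim_seq_ext with (fun N => zs_trunc ks N - (zs_trunc ks N - sum_to N psi)).
  - intros; ring.
  - apply is_lim_seq_minus'; assumption.
Qed.

Lemma zeta_star_mul_stuffle ks1 ks2 ks12 ks21 f g :
  inv_sq_bounded f -> inv_sq_bounded g ->
  represents ks1 f -> represents ks2 g ->
  represents ks12 (stuffle_weight f g) -> represents ks21 (stuffle_weight g f) ->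
  zeta_star ks1 * zeta_star ks2 = zeta_star ks12 + zeta_star ks21.
Proof.
  intros Hf Hg H1 H2 H12 H21.
  pose proof (is_lim_seq_mult' _ _ _ _ (is_lim_seq_zeta_star _ _ H1 Hf)
                                       (is_lim_seq_zeta_star _ _ H2 Hg)) as Hmul.
  pose proof (is_lim_seq_plus' _ _ _ _
                (is_lim_seq_zeta_star _ _ H12 (inv_sq_bounded_stuffle _ _ Hf Hg))
                (is_lim_seq_zeta_star _ _ H21 (inv_sq_bounded_stuffle _ _ Hg Hf))) as Hadd.
  apply (is_lim_seq_ext _ _ _ (fun N => sum_to_stuffle N f g)) in Hmul.
  apply is_lim_seq_unique in Hmul; apply is_lim_seq_unique in Hadd.
  rewrite Hmul in Hadd; injection Hadd; auto.
Qed.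

Definition twos_weight (n k : nat) : R := alt_weight k / (INR k ^ 2) ^ n.

Definition twos_one_weight (m k : nat) : R := 2 / INR k / (INR k ^ 2) ^ m.

Lemma represents_twos_weight n : represents (twos n) (twos_weight n).
Proof.
  replace (twos n) with (twos n ++ []) by apply app_nil_r.
  exact (represents_twos n [] _ represents_nil).
Qed.

Lemma alt_weight_prefix K : alt_weight (S K) + 2 * sum_to K alt_weight = 2.
Proof.
  induction K as [|K IH]; [unfold alt_weight; simpl; ring|].
  cbn [sum_to]; unfold alt_weight in *; simpl pow in *; lra.
Qed.

Lemma represents_twos_one_weight m : represents (twos m ++ [1%nat]) (twos_one_weight m).
Proof.
  eapply represents_ext.
  - exact (represents_twos m _ _ (represents_cons1 _ _ represents_nil)).
  - intros [|k] Hk; [lia|]; unfold weight1, twos_one_weight; simpl pred.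
    rewrite alt_weight_prefix; reflexivity.
Qed.

Lemma alt_div_twos_weight m l : (1 <= l)%nat ->
  alt_div (twos_weight m) l = - twos_one_weight m l.
Proof.
  intros Hl; assert (0 < INR l) by (apply lt_0_INR; lia).
  assert ((INR l ^ 2) ^ m <> 0) by (apply pow_nonzero, pow_nonzero; lra).
  unfold alt_div, twos_weight, twos_one_weight, alt_weight.
  transitivity (-2 * ((-1) ^ l * (-1) ^ l) / INR l / (INR l ^ 2) ^ m); [field; lra|].
  rewrite pow_m1_sqr; field; lra.
Qed.

Lemma alt_div_twos_one_weight n l : (1 <= l)%nat ->
  alt_div (twos_one_weight n) l = - twos_weight (S n) l.
Proof.
  intros Hl; assert (0 < INR l) by (apply lt_0_INR; lia).
  assert ((INR l ^ 2) ^ n <> 0) by (apply pow_nonzero, pow_nonzero; lra).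
  unfold alt_div, twos_weight, twos_one_weight, alt_weight.
  rewrite <- (tech_pow_Rmult (INR l ^ 2) n); field; lra.
Qed.

Lemma represents_twos_one_twos_one m n :
  represents (twos m ++ [1%nat] ++ twos n ++ [1%nat])
             (stuffle_weight (twos_one_weight m) (twos_one_weight n)).
Proof.
  eapply represents_ext.
  - exact (represents_twos m _ _ (represents_cons1 _ _ (represents_twos_one_weight n))).
  - intros k Hk; assert (0 < INR k) by (apply lt_0_INR; lia).
    assert ((INR k ^ 2) ^ m <> 0) by (apply pow_nonzero, pow_nonzero; lra).
    assert ((INR k ^ 2) ^ n <> 0) by (apply pow_nonzero, pow_nonzero; lra).
    unfold weight1, stuffle_weight; set (T := sum_to (pred k) (twos_one_weight n)).
    unfold twos_one_weight; field; lra.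
Qed.

Lemma represents_twos_one_twos m n :
  represents (twos m ++ [1%nat] ++ twos n)
             (stuffle_weight (twos_one_weight m) (twos_weight n)).
Proof.
  eapply represents_ext.
  - exact (represents_twos m _ _ (represents_cons1 _ _ (represents_twos_weight n))).
  - intros k Hk; assert (0 < INR k) by (apply lt_0_INR; lia).
    assert ((INR k ^ 2) ^ m <> 0) by (apply pow_nonzero, pow_nonzero; lra).
    unfold weight1, stuffle_weight; set (T := sum_to (pred k) (twos_weight n)).
    unfold twos_one_weight; field; lra.
Qed.

Lemma represents_twos_three_twos n m :
  represents (twos n ++ [3%nat] ++ twos m)
             (stuffle_weight (twos_weight (S n)) (twos_one_weight m)).
Proof.
  eapply represents_ext.
  - exact (represents_twos n _ _ (represents_cons3 _ _ (represents_twos_weight m))).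
  - intros k Hk; assert (0 < INR k) by (apply lt_0_INR; lia).
    assert ((INR k ^ 2) ^ n <> 0) by (apply pow_nonzero, pow_nonzero; lra).
    unfold weight3, stuffle_weight.
    rewrite alt_div_twos_weight, (sum_to_ext _ _ (fun l => - twos_one_weight m l)), sum_to_opp
      by first [lia | intros; apply alt_div_twos_weight; lia].
    set (T := sum_to (pred k) (twos_one_weight m)).
    unfold twos_weight, alt_weight; rewrite <- (tech_pow_Rmult (INR k ^ 2) n).
    field; split; [assumption | lra].
Qed.

Lemma represents_twos_three_twos_one m n :
  represents (twos m ++ [3%nat] ++ twos n ++ [1%nat])
             (stuffle_weight (twos_weight (S m)) (twos_weight (S n))).
Proof.
  eapply represents_ext.
  - exact (represents_twos m _ _ (represents_cons3 _ _ (represents_twos_one_weight n))).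
  - intros k Hk; assert (0 < INR k) by (apply lt_0_INR; lia).
    assert ((INR k ^ 2) ^ m <> 0) by (apply pow_nonzero, pow_nonzero; lra).
    unfold weight3, stuffle_weight.
    rewrite alt_div_twos_one_weight, (sum_to_ext _ _ (fun l => - twos_weight (S n) l)), sum_to_opp
      by first [lia | intros; apply alt_div_twos_one_weight; lia].
    set (T := sum_to (pred k) (twos_weight (S n))).
    set (w := twos_weight (S n) k); unfold twos_weight, alt_weight.
    rewrite <- (tech_pow_Rmult (INR k ^ 2) m); field; split; [assumption | lra].
Qed.

Lemma inv_le_1 x : 1 <= x -> 0 < / x <= 1.
Proof.
  intros Hx; split; [apply Rinv_0_lt_compat; lra|].
  rewrite <- Rinv_1; apply Rinv_le_contravar; lra.
Qed.

Lemma inv_pow_sq_le_1 m k : (1 <= k)%nat -> 0 < / (INR k ^ 2) ^ m <= 1.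
Proof.
  intros Hk; assert (1 <= INR k) by (apply (le_INR 1); lia).
  apply inv_le_1, pow_R1_Rle; simpl; nra.
Qed.

Lemma inv_sq_bounded_div_sq f g :
  (forall k, (1 <= k)%nat -> Rabs (f k) <= 2) ->
  (forall k, (1 <= k)%nat -> g k = f k / INR k ^ 2) ->
  inv_sq_bounded g.
Proof.
  intros Hf Hg; exists 2; split; [lra|]; intros k Hk.
  assert (0 < / INR k ^ 2) by (apply Rinv_0_lt_compat, pow_lt, lt_0_INR; lia).
  rewrite Hg by exact Hk; unfold Rdiv; rewrite Rabs_mult, (Rabs_pos_eq (/ INR k ^ 2)) by lra.
  apply Rmult_le_compat_r; [lra | auto].
Qed.

Lemma inv_sq_bounded_twos_weight n : inv_sq_bounded (twos_weight (S n)).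
Proof.
  apply inv_sq_bounded_div_sq with (twos_weight n); intros k Hk;
    pose proof (inv_pow_sq_le_1 n k Hk); unfold twos_weight, alt_weight.
  - unfold Rdiv; rewrite !Rabs_mult, pow_1_abs, Rabs_left, Rabs_pos_eq by lra; nra.
  - assert (0 < INR k) by (apply lt_0_INR; lia).
    rewrite <- (tech_pow_Rmult (INR k ^ 2) n); field.
    split; [apply pow_nonzero, pow_nonzero|]; lra.
Qed.

Lemma inv_sq_bounded_twos_one_weight m : inv_sq_bounded (twos_one_weight (S m)).
Proof.
  apply inv_sq_bounded_div_sq with (twos_one_weight m); intros k Hk;
    pose proof (inv_pow_sq_le_1 m k Hk);
    assert (0 < INR k) by (apply lt_0_INR; lia); unfold twos_one_weight.
  - assert (0 < / INR k <= 1) by (apply inv_le_1, (le_INR 1); lia).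
    unfold Rdiv; rewrite Rabs_pos_eq by (apply Rmult_le_pos; [apply Rmult_le_pos|]; lra).
    nra.
  - rewrite <- (tech_pow_Rmult (INR k ^ 2) m); field.
    split; [lra | apply pow_nonzero, pow_nonzero; lra].
Qed.

Theorem theorem1p1 (m n : nat) (hm : (1 <= m)%nat) (hn : (1 <= n)%nat) :
  zeta_star (twos m ++ [1%nat]) * zeta_star (twos n ++ [1%nat])
    = zeta_star (twos m ++ [1%nat] ++ twos n ++ [1%nat])
      + zeta_star (twos n ++ [1%nat] ++ twos m ++ [1%nat])
  /\
  zeta_star (twos m ++ [1%nat]) * zeta_star (twos n)
    = zeta_star (twos m ++ [1%nat] ++ twos n)
      + zeta_star (twos (n - 1) ++ [3%nat] ++ twos m)
  /\
  zeta_star (twos m) * zeta_star (twos n)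
    = zeta_star (twos (m - 1) ++ [3%nat] ++ twos (n - 1) ++ [1%nat])
      + zeta_star (twos (n - 1) ++ [3%nat] ++ twos (m - 1) ++ [1%nat]).
Proof.
  destruct m as [|m]; [lia|]; destruct n as [|n]; [lia|].
  replace (S m - 1)%nat with m by lia; replace (S n - 1)%nat with n by lia.
  split; [|split].
  - apply zeta_star_mul_stuffle with (twos_one_weight (S m)) (twos_one_weight (S n));
      auto using inv_sq_bounded_twos_one_weight, represents_twos_one_weight,
                 represents_twos_one_twos_one.
  - apply zeta_star_mul_stuffle with (twos_one_weight (S m)) (twos_weight (S n));
      auto using inv_sq_bounded_twos_one_weight, inv_sq_bounded_twos_weight,
                 represents_twos_one_weight, represents_twos_weight,
                 represents_twos_one_twos, represents_twos_three_twos.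
  - apply zeta_star_mul_stuffle with (twos_weight (S m)) (twos_weight (S n));
      auto using inv_sq_bounded_twos_weight, represents_twos_weight,
                 represents_twos_three_twos_one.
Qed.
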